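(* Let $\sigma>0$, $\lambda>0$, $\rho>0$ satisfy $\rho^{-2}\sigma<1$ and $\rho\le\lambda-2\rho^{-1}\sigma(1-\rho^{-2}\sigma)^{-1}$. Define $\sigma_1=\sigma$, $\lambda_1=\lambda$ and $\sigma_{k+1}=\lambda_k^{-2}\sigma_k^2$, $\lambda_{k+1}=\lambda_k-2\lambda_k^{-1}\sigma_k$ for $k\in\mathbb{Z}_{>0}$. Then the sequence $\{(\sigma_k,\lambda_k)\}_{k\ge1}$ is convergent, with $\sigma_k\to0$, $\lambda_k>0$ for all $k\in\mathbb{Z}_{>0}$, and $\lambda_k\downarrow\bar\lambda$ as $k\to\infty$ for some $\bar\lambda\ge\rho$. *)

From Stdlib Require Import Reals.
Open Scope R_scope.

(* seqSL s l n = (sigma_{n+1}, lambda_{n+1}) : index n = 0 corresponds to k = 1. *)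
Fixpoint seqSL (s l : R) (n : nat) : R * R :=
  match n with
  | O => (s, l)
  | S m => let (sk, lk) := seqSL s l m in
           (/ (lk ^ 2) * sk ^ 2, lk - 2 * / lk * sk)
  end.

Definition sig_seq (s l : R) (n : nat) : R := fst (seqSL s l n).
Definition lam_seq (s l : R) (n : nat) : R := snd (seqSL s l n).

(* With q = sigma / rho^2, induction gives sigma_k <= sigma q^(k-1) together with
   lambda_k >= rho + c q^(k-1) / (1 - q), where c = 2 sigma / rho: the step
   subtracts 2 sigma_k / lambda_k <= c q^(k-1) from lambda_k, which is exactly the
   drop of the geometric tail c q^(k-1) / (1 - q).  Hence sigma_k -> 0 geometrically,
   and lambda_k is decreasing and bounded below by rho, so it converges to a limit
   that is still >= rho. *)

From Stdlib Require Import Reals Lra.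
Open Scope R_scope.

Lemma sig_seq_S s l n :
  sig_seq s l (S n) = / (lam_seq s l n ^ 2) * sig_seq s l n ^ 2.
Proof. unfold sig_seq, lam_seq; simpl; destruct (seqSL s l n); reflexivity. Qed.

Lemma lam_seq_S s l n :
  lam_seq s l (S n) = lam_seq s l n - 2 * / lam_seq s l n * sig_seq s l n.
Proof. unfold sig_seq, lam_seq; simpl; destruct (seqSL s l n); reflexivity. Qed.

Lemma pow_le_one (q : R) (n : nat) : 0 <= q <= 1 -> q ^ n <= 1.
Proof. intros Hq; rewrite <- (pow1 n); apply pow_incr; exact Hq. Qed.

Lemma Un_cv_geometric_bound (u : nat -> R) (a q : R) :
  0 < a -> 0 <= q < 1 -> (forall n, 0 <= u n <= a * q ^ n) -> Un_cv u 0.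
Proof.
  intros Ha Hq Hu eps Heps.
  destruct (pow_lt_1_zero q) with (y := eps / a) as [N HN].
  - rewrite Rabs_right; lra.
  - apply Rdiv_lt_0_compat; lra.
  - exists N; intros n Hn; specialize (HN n Hn); specialize (Hu n).
    unfold R_dist; rewrite Rminus_0_r, Rabs_right by lra.
    rewrite Rabs_right in HN by (apply Rle_ge, pow_le; lra).
    apply (Rmult_lt_compat_l a) in HN; [|lra].
    replace (a * (eps / a)) with eps in HN by (field; lra).
    lra.
Qed.

Lemma decreasing_cv_ge (u : nat -> R) (m : R) :
  Un_decreasing u -> (forall n, m <= u n) -> exists l, Un_cv u l /\ m <= l.
Proof.
  intros Hdec Hm.
  destruct (decreasing_cv u Hdec) as [l Hl].
  { exists (- m); intros x [i ->]; unfold opp_seq; specialize (Hm i); lra. }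
  exists l; split; [exact Hl|].
  apply (Rle_cv_lim (Un := fun _ => m) (Vn := u)); [exact Hm| |exact Hl].
  intros e He; exists O; intros; unfold R_dist; rewrite Rminus_diag, Rabs_R0; lra.
Qed.

Section Recursion.

Variables (sigma lambda rho : R).
Hypotheses (Hs : 0 < sigma) (Hr : 0 < rho)
  (H1 : / (rho ^ 2) * sigma < 1)
  (H2 : rho <= lambda - 2 * / rho * sigma * / (1 - / (rho ^ 2) * sigma)).

Let q := / (rho ^ 2) * sigma.
Let c := 2 * / rho * sigma.

Let q_pos : 0 < q.
Proof. apply Rmult_lt_0_compat; [apply Rinv_0_lt_compat, pow_lt|]; lra. Qed.

Let q_lt_1 : q < 1 := H1.

Let c_pos : 0 < c.
Proof.
  unfold c; apply Rmult_lt_0_compat; [apply Rmult_lt_0_compat; [|apply Rinv_0_lt_compat]|]; lra.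
Qed.

Let tail_nonneg n : 0 <= c * q ^ n / (1 - q).
Proof.
  apply Rmult_le_pos; [apply Rmult_le_pos; [|apply pow_le]|apply Rlt_le, Rinv_0_lt_compat]; lra.
Qed.

Lemma sig_step_bound (x y : R) (n : nat) :
  0 < x <= sigma * q ^ n -> rho <= y -> 0 < / (y ^ 2) * x ^ 2 <= sigma * q ^ S n.
Proof.
  intros Hx Hy.
  assert (Hinv : / (y ^ 2) <= / (rho ^ 2))
    by (apply Rinv_le_contravar; [apply pow_lt|apply pow_incr]; lra).
  assert (Hx2 : x ^ 2 <= (sigma * q ^ n) ^ 2) by (apply pow_incr; lra).
  assert (Hqn : 0 < q ^ n <= 1) by (split; [apply pow_lt|apply pow_le_one]; lra).
  split.
  - apply Rmult_lt_0_compat; [apply Rinv_0_lt_compat|]; apply pow_lt; lra.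
  - apply Rle_trans with (/ (rho ^ 2) * (sigma * q ^ n) ^ 2).
    + apply Rmult_le_compat; try lra;
        [apply Rlt_le, Rinv_0_lt_compat, pow_lt | apply pow2_ge_0]; lra.
    + replace (/ (rho ^ 2) * (sigma * q ^ n) ^ 2) with (sigma * q ^ S n * q ^ n)
        by (unfold q; simpl; ring).
      rewrite <- (Rmult_1_r (sigma * q ^ S n)) at 2.
      apply Rmult_le_compat_l; [apply Rmult_le_pos, pow_le|]; lra.
Qed.

Lemma lam_step_bound (x y : R) (n : nat) :
  0 < x <= sigma * q ^ n -> rho + c * q ^ n / (1 - q) <= y ->
  rho + c * q ^ S n / (1 - q) <= y - 2 * / y * x.
Proof.
  intros Hx Hy.
  assert (Hry : rho <= y) by (specialize (tail_nonneg n); lra).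
  assert (Hdrop : 2 * / y * x <= c * q ^ n).
  { unfold c; replace (2 * / rho * sigma * q ^ n) with (2 * / rho * (sigma * q ^ n)) by ring.
    apply Rmult_le_compat; try lra.
    - apply Rmult_le_pos; [lra|apply Rlt_le, Rinv_0_lt_compat; lra].
    - apply Rmult_le_compat_l; [lra|apply Rinv_le_contravar; lra]. }
  assert (Htail : c * q ^ n / (1 - q) = c * q ^ S n / (1 - q) + c * q ^ n)
    by (simpl; field; lra).
  lra.
Qed.

Lemma sig_lam_bounds n :
  0 < sig_seq sigma lambda n <= sigma * q ^ n /\
  rho + c * q ^ n / (1 - q) <= lam_seq sigma lambda n.
Proof.
  induction n as [|n [Hsig Hlam]].
  - unfold sig_seq, lam_seq; simpl; unfold Rdiv; rewrite !Rmult_1_r.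
    fold q c in H2; lra.
  - assert (Hry : rho <= lam_seq sigma lambda n) by (specialize (tail_nonneg n); lra).
    rewrite sig_seq_S, lam_seq_S; split.
    + exact (sig_step_bound _ _ _ Hsig Hry).
    + exact (lam_step_bound _ _ _ Hsig Hlam).
Qed.

Lemma lam_seq_ge n : rho <= lam_seq sigma lambda n.
Proof. destruct (sig_lam_bounds n) as [_ H]; specialize (tail_nonneg n); lra. Qed.

Lemma lam_seq_decreasing : Un_decreasing (lam_seq sigma lambda).
Proof.
  intro n; rewrite lam_seq_S.
  destruct (sig_lam_bounds n) as [[Hsig _] _]; specialize (lam_seq_ge n) as Hlam.
  assert (0 <= 2 * / lam_seq sigma lambda n * sig_seq sigma lambda n); [|lra].
  apply Rmult_le_pos; [apply Rmult_le_pos; [lra|apply Rlt_le, Rinv_0_lt_compat]|]; lra.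
Qed.

Lemma sig_seq_cv0 : Un_cv (sig_seq sigma lambda) 0.
Proof.
  apply (Un_cv_geometric_bound _ sigma q); [lra|lra|].
  intro n; destruct (sig_lam_bounds n) as [Hsig _]; lra.
Qed.

End Recursion.

Theorem lemma4p1 (sigma lambda rho : R)
  (Hs : 0 < sigma) (Hl : 0 < lambda) (Hr : 0 < rho)
  (H1 : / (rho ^ 2) * sigma < 1)
  (H2 : rho <= lambda - 2 * / rho * sigma * / (1 - / (rho ^ 2) * sigma)) :
  Un_cv (sig_seq sigma lambda) 0 /\
  (forall n : nat, 0 < lam_seq sigma lambda n) /\
  (forall n : nat, lam_seq sigma lambda (S n) <= lam_seq sigma lambda n) /\
  exists lbar : R, Un_cv (lam_seq sigma lambda) lbar /\ rho <= lbar.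
Proof.
  pose proof (lam_seq_ge _ _ _ Hs Hr H1 H2) as Hge.
  pose proof (lam_seq_decreasing _ _ _ Hs Hr H1 H2) as Hdec.
  split; [exact (sig_seq_cv0 _ _ _ Hs Hr H1 H2)|].
  split; [intro n; specialize (Hge n); lra|].
  split; [exact Hdec|].
  exact (decreasing_cv_ge _ _ Hdec Hge).
Qed.
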